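(* Let $A=(a_{ij})\in M(m,\mathbb{C})$ be invertible and let $X_A$ be a complex algebra spanned by elements $\{x_{ij}:i,j=1,\ldots,m\}$ (not assumed linearly independent) satisfying $x_{ij}x_{kl}=a_{jk}x_{il}$. Then either $X_A=\{0\}$, or $X_A\neq\{0\}$, in which case $X_A$ is isomorphic to the matrix algebra $M(m,\mathbb{C})$, the elements $x_{ij}$ are linearly independent (in particular all nonzero) and form a basis of $X_A$, and the unit of $X_A$ is $\mathbb{1}=\sum_{i,j=1}^m (A^{-1})_{ij}\,x_{ij}$. *)

From HB Require Import structures.
From mathcomp Require Import all_boot all_order all_algebra.
From mathcomp Require Import complex.
From mathcomp Require Import reals.
Set Implicit Arguments. Unset Strict Implicit. Unset Printing Implicit Defensive.
Import Order.TTheory GRing.Theory Num.Theory.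
Local Open Scope ring_scope.

Definition Cplx (R : realType) : Type := complex R.

Definition is_assoc_algebra (K : fieldType) (V : lmodType K) (mul : V -> V -> V) : Prop :=
  [/\ forall (a : K) (u v w : V), mul (a *: u + v) w = a *: mul u w + mul v w,
      forall (a : K) (u v w : V), mul u (a *: v + w) = a *: mul u v + mul u w
    & forall u v w : V, mul u (mul v w) = mul (mul u v) w].

Definition algebra_iso_to_matrix (K : fieldType) (V : lmodType K) (mul : V -> V -> V)
  (m : nat) (f : V -> 'M[K]_m) : Prop :=
  [/\ forall (a : K) (u v : V), f (a *: u + v) = a *: f u + f v,
      forall u v : V, f (mul u v) = f u *m f v
    & bijective f].

From HB Require Import structures.
From mathcomp Require Import all_boot all_order all_algebra.
From mathcomp Require Import complex reals.
Import Order.TTheory GRing.Theory Num.Theory.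
Local Open Scope ring_scope.

Set Implicit Arguments.
Unset Strict Implicit.
Unset Printing Implicit Defensive.

(* The map [xcomb : M |-> \sum_(i, j) M i j *: x i j] is linear, onto, and turns
   the twisted product [M *m A *m N] of matrices into the product of X.  If
   [xcomb C = 0], multiplying by [x p q] on the left and by [x r s] on the right
   gives [(A *m C *m A) q r *: x p s = 0]; so as soon as one [x p s] is nonzero,
   [A *m C *m A = 0] and, A being invertible, [C = 0].  Hence either every
   [x i j] vanishes, or [xcomb] is a bijection and [v |-> xcomb^-1 v *m A] is an
   isomorphism onto the matrix algebra, with unit [xcomb (invmx A)]. *)

Lemma mul_delta_mx_mid (R : pzRingType) (m n p q : nat) (B : 'M[R]_(n, p))
    (i : 'I_m) (j : 'I_n) (k : 'I_p) (l : 'I_q) :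
  delta_mx i j *m B *m delta_mx k l = B j k *: delta_mx i l.
Proof.
apply/matrixP => i' l'; rewrite !mxE.
rewrite (bigD1 k) //= big1 => [|k' /negbTE k'k]; last by rewrite !mxE k'k mulr0.
rewrite !mxE eqxx addr0 (bigD1 j) //= big1 => [|j' /negbTE j'j]; last first.
  by rewrite !mxE j'j andbF mul0r.
rewrite !mxE eqxx andbT addr0.
by case: (i' == i); case: (l' == l); rewrite ?mulr1 ?mul1r ?mulr0 ?mul0r.
Qed.

Section MatrixUnitsAlgebra.

Variables (K : fieldType) (X : lmodType K) (mul : X -> X -> X).
Hypothesis mul_alg : is_assoc_algebra mul.

Lemma mulDl u v w : mul (u + v) w = mul u w + mul v w.
Proof. by case: mul_alg => mulPl _ _; rewrite -{1}[u]scale1r mulPl scale1r. Qed.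

Lemma mulDr u v w : mul w (u + v) = mul w u + mul w v.
Proof. by case: mul_alg => _ mulPr _; rewrite -{1}[u]scale1r mulPr scale1r. Qed.

Lemma mul0l w : mul 0 w = 0.
Proof. by apply: (addrI (mul 0 w)); rewrite addr0 -mulDl addr0. Qed.

Lemma mul0r w : mul w 0 = 0.
Proof. by apply: (addrI (mul w 0)); rewrite addr0 -mulDr addr0. Qed.

Lemma mulZl a u w : mul (a *: u) w = a *: mul u w.
Proof. by case: mul_alg => mulPl _ _; rewrite -[a *: u]addr0 mulPl mul0l addr0. Qed.

Lemma mulZr a u w : mul w (a *: u) = a *: mul w u.
Proof. by case: mul_alg => _ mulPr _; rewrite -[a *: u]addr0 mulPr mul0r addr0. Qed.

Lemma mul_suml I (r : seq I) (P : pred I) (F : I -> X) w :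
  mul (\sum_(i <- r | P i) F i) w = \sum_(i <- r | P i) mul (F i) w.
Proof. exact: (big_morph (mul^~ w) (fun u v => mulDl u v w) (mul0l w)). Qed.

Lemma mul_sumr I (r : seq I) (P : pred I) (F : I -> X) w :
  mul w (\sum_(i <- r | P i) F i) = \sum_(i <- r | P i) mul w (F i).
Proof. exact: (big_morph (mul w) (fun u v => mulDr u v w) (mul0r w)). Qed.

Variables (m : nat) (A : 'M[K]_m) (x : 'I_m -> 'I_m -> X).
Hypothesis mul_x : forall i j k l, mul (x i j) (x k l) = A j k *: x i l.

Definition xcomb (M : 'M[K]_m) : X := \sum_(i < m) \sum_(j < m) M i j *: x i j.

Lemma xcomb_is_linear : linear xcomb.
Proof.
move=> a M N; rewrite /xcomb scaler_sumr -big_split; apply: eq_bigr => i _.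
rewrite scaler_sumr -big_split; apply: eq_bigr => j _.
by rewrite !mxE scalerDl scalerA.
Qed.

HB.instance Definition _ :=
  GRing.isLinear.Build K 'M[K]_m X *:%R xcomb xcomb_is_linear.

Lemma xcomb_matrix (c : 'I_m -> 'I_m -> K) :
  xcomb (\matrix_(i, j) c i j) = \sum_(i < m) \sum_(j < m) c i j *: x i j.
Proof. by apply: eq_bigr => i _; apply: eq_bigr => j _; rewrite mxE. Qed.

Lemma xcomb_delta i j : xcomb (delta_mx i j) = x i j.
Proof.
rewrite /xcomb (bigD1 i) //= [X in _ + X]big1 => [|i' /negbTE i'i]; last first.
  by rewrite big1 // => j' _; rewrite mxE i'i scale0r.
rewrite addr0 (bigD1 j) //= [X in _ + X]big1 => [|j' /negbTE j'j]; last first.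
  by rewrite mxE j'j andbF scale0r.
by rewrite mxE !eqxx scale1r addr0.
Qed.

Lemma mul_xcomb M N : mul (xcomb M) (xcomb N) = xcomb (M *m A *m N).
Proof.
rewrite /xcomb mul_suml; apply: eq_bigr => i _.
rewrite mul_suml.
under eq_bigr => j _ do rewrite mulZl mul_sumr.
under eq_bigr => j _ do under eq_bigr => k _ do rewrite mul_sumr.
under eq_bigr => j _ do under eq_bigr => k _ do under eq_bigr => l _ do
  rewrite mulZr mul_x.
under [RHS]eq_bigr => l _ do rewrite !mxE scaler_suml.
under [RHS]eq_bigr => l _ do under eq_bigr => k _ do
  rewrite !mxE mulr_suml scaler_suml.
rewrite exchange_big /=.
under [RHS]eq_bigr => k _ do rewrite exchange_big /=.
rewrite exchange_big /=.
apply: eq_bigr => j _; rewrite scaler_sumr; apply: eq_bigr => k _.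
rewrite scaler_sumr; apply: eq_bigr => l _.
by rewrite !scalerA mulrAC.
Qed.

Hypothesis A_unit : A \in unitmx.

Lemma mul_xcomb_invmxl N : mul (xcomb (invmx A)) (xcomb N) = xcomb N.
Proof. by rewrite mul_xcomb mulVmx // mul1mx. Qed.

Lemma mul_xcomb_invmxr N : mul (xcomb N) (xcomb (invmx A)) = xcomb N.
Proof. by rewrite mul_xcomb mulmxK. Qed.

Lemma xcomb_inj p s : x p s != 0 -> injective xcomb.
Proof.
move=> xps_neq0; apply: raddf_inj => C xcombC.
have ACA0 : A *m C *m A = 0.
  apply/matrixP => q r; rewrite [RHS]mxE.
  have : xcomb (delta_mx p q *m A *m (C *m A *m delta_mx r s)) = 0.
    by rewrite -!mul_xcomb xcombC mul0l mul0r.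
  have -> : delta_mx p q *m A *m (C *m A *m delta_mx r s)
          = delta_mx p q *m (A *m C *m A) *m delta_mx r s by rewrite !mulmxA.
  rewrite mul_delta_mx_mid linearZ /= xcomb_delta => /eqP.
  by rewrite scaler_eq0 (negbTE xps_neq0) orbF => /eqP.
have := congr1 (fun M => invmx A *m M *m invmx A) ACA0.
by rewrite /= !mulmxA mulmxK // mulVmx // mul1mx mulmx0 mul0mx.
Qed.

Lemma xcomb_algebra_iso :
    (forall v, exists M, v = xcomb M) -> injective xcomb ->
  exists f : X -> 'M[K]_m, algebra_iso_to_matrix mul f.
Proof.
move=> xcomb_onto xcombI.
have ex_coef v : exists M, v == xcomb M by have [M ->] := xcomb_onto v; exists M.
pose coef v := xchoose (ex_coef v).
have coefK : cancel coef xcomb by move=> v; apply/esym/eqP/(xchooseP (ex_coef v)).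
have xcombK : cancel xcomb coef by move=> M; apply: xcombI; rewrite coefK.
exists (fun v => coef v *m A); split.
- move=> a u v; have -> : coef (a *: u + v) = a *: coef u + coef v.
    by apply: xcombI; rewrite linearP /= !coefK.
  by rewrite mulmxDl scalemxAl.
- move=> u v; have -> : coef (mul u v) = coef u *m A *m coef v.
    by apply: xcombI; rewrite -mul_xcomb !coefK.
  by rewrite !mulmxA.
- exists (fun M => xcomb (M *m invmx A)) => [v | M] /=.
  + by rewrite mulmxK // coefK.
  + by rewrite xcombK mulmxKV.
Qed.

End MatrixUnitsAlgebra.

Theorem theorem31 (R : realType) (m : nat) (A : 'M[Cplx R]_m)
  (hA : A \in unitmx)
  (X : lmodType (Cplx R)) (mul : X -> X -> X) (hX : is_assoc_algebra mul)
  (x : 'I_m -> 'I_m -> X)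
  (hspan : forall v : X, exists c : 'I_m -> 'I_m -> Cplx R,
             v = \sum_(i < m) \sum_(j < m) c i j *: x i j)
  (hrel : forall i j k l : 'I_m, mul (x i j) (x k l) = A j k *: x i l) :
  (forall v : X, v = 0)
  \/
  [/\ exists v : X, v != 0,
      exists f : X -> 'M[Cplx R]_m, algebra_iso_to_matrix mul f,
      forall c : 'I_m -> 'I_m -> Cplx R,
        \sum_(i < m) \sum_(j < m) c i j *: x i j = 0 -> forall i j, c i j = 0,
      forall i j : 'I_m, x i j != 0
    & forall v : X,
        mul (\sum_(i < m) \sum_(j < m) (invmx A) i j *: x i j) v = v /\
        mul v (\sum_(i < m) \sum_(j < m) (invmx A) i j *: x i j) = v].
Proof.
have xcomb_onto v : exists M, v = xcomb x M.
  by have [c ->] := hspan v; exists (\matrix_(i, j) c i j); rewrite xcomb_matrix.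
have [/existsP [p /existsP [s xps_neq0]] | x_eq0] :=
  boolP [exists p, exists s, x p s != 0]; last first.
  left => v; have [M ->] := xcomb_onto v.
  rewrite /xcomb big1 // => i _; rewrite big1 // => j _.
  by move/existsPn: x_eq0 => /(_ i) /existsPn /(_ j) /negPn /eqP ->; rewrite scaler0.
have xcombI := xcomb_inj hX hrel hA xps_neq0.
right; split.
- by exists (x p s).
- exact: xcomb_algebra_iso.
- move=> c; rewrite -xcomb_matrix -(linear0 (xcomb x)) => /xcombI /matrixP c0 i j.
  by have := c0 i j; rewrite !mxE.
- move=> i j; rewrite -xcomb_delta -(linear0 (xcomb x)) (inj_eq xcombI).
  by apply/eqP => /matrixP /(_ i j) /eqP; rewrite !mxE !eqxx oner_eq0.
- move=> v; have [N ->] := xcomb_onto v; rewrite -/(xcomb x (invmx A)).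
  by rewrite (mul_xcomb_invmxl hX hrel hA) (mul_xcomb_invmxr hX hrel hA).
Qed.
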